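(* For every word $w$ of length $n\ge 2$, $f(w)\ge n+2$.
   Context: A word of length $n$ is a sequence $w=w_1w_2\cdots w_n$ of letters (symbols). Let $[n]=\{1,\dots,n\}$. An $n$-grid is a function $G:[n]^2\to\Sigma$, where $\Sigma$ is an arbitrary set of letters. The $i$th row of $G$ contains $w$ if $G(i,j)=w_j$ for all $1\le j\le n$, or $G(i,j)=w_{n-j+1}$ for all $1\le j\le n$. The $j$th column contains $w$ if $G(i,j)=w_i$ for all $i$, or $G(i,j)=w_{n-i+1}$ for all $i$. The main diagonal contains $w$ if $G(i,i)=w_i$ for all $i$ or $G(i,i)=w_{n-i+1}$ for all $i$; the anti-diagonal contains $w$ if $G(i,n-i+1)=w_i$ for all $i$ or $G(i,n-i+1)=w_{n-i+1}$ for all $i$. Let $f(w,G)$ be the number of the $2n+2$ lines ($n$ rows, $n$ columns, $2$ diagonals) of $G$ that contain $w$, and $f(w)=\max_G f(w,G)$ over all $n$-grids $G$. *)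

From mathcomp Require Import all_boot.
Set Implicit Arguments. Unset Strict Implicit. Unset Printing Implicit Defensive.

(* Indices are 0-based: position j in {1..n} of the paper is j-1 : 'I_n;
   n - j + 1 corresponds to rev_ord. *)

Definition word (S : Type) (n : nat) := 'I_n -> S.
Definition grid (S : Type) (n : nat) := 'I_n -> 'I_n -> S.

Section Lines.
Variables (S : eqType) (n : nat) (w : word S n) (G : grid S n).

Definition line_contains (l : 'I_n -> S) : bool :=
  [forall j, l j == w j] || [forall j, l j == w (rev_ord j)].

Definition row_contains (i : 'I_n) := line_contains (fun j => G i j).
Definition col_contains (j : 'I_n) := line_contains (fun i => G i j).
Definition diag_contains := line_contains (fun i => G i i).
Definition antidiag_contains := line_contains (fun i => G i (rev_ord i)).

Definition fwG : nat :=
  #|[pred i | row_contains i]| + #|[pred j | col_contains j]|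
  + diag_contains + antidiag_contains.
End Lines.

From mathcomp Require Import all_boot.

(* Fill every row of the grid with w.  All n rows then contain w, the main
   diagonal reads w forwards and the anti-diagonal reads it backwards. *)

Section RowGrid.
Variables (S : eqType) (n : nat) (w : word S n).

Definition row_grid : grid S n := fun _ j => w j.

Lemma row_contains_row_grid (i : 'I_n) : row_contains w row_grid i.
Proof. by apply/orP; left; apply/forallP. Qed.

Lemma card_rows_row_grid : #|[pred i | row_contains w row_grid i]| = n.
Proof.
rewrite -[RHS]card_ord; apply: eq_card => i.
by rewrite inE row_contains_row_grid.
Qed.

Lemma diag_contains_row_grid : diag_contains w row_grid.
Proof. by apply/orP; left; apply/forallP. Qed.

Lemma antidiag_contains_row_grid : antidiag_contains w row_grid.
Proof. by apply/orP; right; apply/forallP. Qed.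

Lemma fwG_row_grid : n + 2 <= fwG w row_grid.
Proof.
rewrite /fwG card_rows_row_grid diag_contains_row_grid.
by rewrite antidiag_contains_row_grid -!addnA leq_add2l addnC leq_addr.
Qed.

End RowGrid.

(* f(w) = max_G f(w,G) >= n+2  iff  some grid G has f(w,G) >= n+2. *)
Theorem lemma8 (S : eqType) (n : nat) (w : word S n) :
  2 <= n -> exists G : grid S n, n + 2 <= fwG w G.
Proof.
(* The construction works for every n. *)
by move=> _; eexists; apply: fwG_row_grid.
Qed.
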